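(* Let $L\ge 3$, $W=(\mathbb{Z}/2\mathbb{Z})^{*L}$ with generating set $S$, $q\in(0,1]$, $h=\sum_{s\in S}T_s$, and let $R_h$ be the operator on $\ell^2(W)$ of right multiplication by $h$. For every $v,w\in W$ with $|v|=|w|$ and every $\epsilon>0$ there exists $\eta\in\ell^2(W)$ such that $$\|e_v-e_w-(h\eta-R_h\eta)\|_2<\epsilon.$$
   Context: $W=(\mathbb{Z}/2\mathbb{Z})^{*L}$ is the free product of $L$ copies of $\mathbb{Z}/2\mathbb{Z}$; $S$ is the set of the $L$ canonical generators, $|\cdot|$ is word length with respect to $S$. Put $p=\frac{q-1}{q^2}$. $\mathbb{C}_q[W]$ is the $*$-algebra with linear basis $\{T_w: w\in W\}$, $T_e=1$, $T_w^*=T_{w^{-1}}$, and for $s\in S$, $w\in W$: $T_sT_w=T_{sw}$ if $|sw|>|w|$, $T_sT_w=T_{sw}+pT_w$ if $|sw|<|w|$ (equivalently $T_wT_s=T_{ws}$ if $|ws|>|w|$, $T_wT_s=T_{ws}+pT_w$ if $|ws|<|w|$). Identify $T_w$ with $e_w=\delta_w\in\ell^2(W)$; left multiplication by $h$ extends to a bounded operator (again denoted $h$) on $\ell^2(W)$, and right multiplication by $h$, $T_v\mapsto T_vh$, extends to a bounded operator $R_h$ on $\ell^2(W)$. *)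

From HB Require Import structures.
From mathcomp Require Import all_boot all_order all_algebra.
From mathcomp Require Import complex.
From mathcomp Require Import reals.
Set Implicit Arguments. Unset Strict Implicit. Unset Printing Implicit Defensive.
Import Order.TTheory GRing.Theory Num.Theory.
Local Open Scope ring_scope.
Local Open Scope complex_scope.

(* The free product W = (Z/2Z)^{*L}: elements are reduced words over the
   alphabet 'I_L (the canonical generators), i.e. words with no two equal
   consecutive letters. *)
Definition reduced (L : nat) (s : seq 'I_L) : bool :=
  sorted (fun a b : 'I_L => a != b) s.

Definition FreeZ2 (L : nat) := {s : seq 'I_L | reduced s}.

Definition wlen (L : nat) (w : FreeZ2 L) : nat := size (val w).

Definition lmul_seq (L : nat) (s : 'I_L) (w : seq 'I_L) : seq 'I_L :=
  if w is a :: w' then (if a == s then w' else s :: w) else [:: s].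

Definition rmul_seq (L : nat) (w : seq 'I_L) (s : 'I_L) : seq 'I_L :=
  if w is a :: w' then
    (if last a w' == s then belast a w' else rcons w s)
  else [:: s].

Lemma lmul_reduced (L : nat) (s : 'I_L) (w : seq 'I_L) :
  reduced w -> reduced (lmul_seq s w).
Proof.
rewrite /reduced /lmul_seq; case: w => [|a w] //= H.
case: eqP => [_|/eqP Has]; first by case: w H => //= b w /andP[].
by rewrite /= eq_sym Has.
Qed.

Lemma rmul_reduced (L : nat) (w : seq 'I_L) (s : 'I_L) :
  reduced w -> reduced (rmul_seq w s).
Proof.
rewrite /reduced /rmul_seq; case: w => [|a w] // H.
case: eqP => [_|/eqP Has].
  move: H; rewrite lastI; case: (belast a w) => [|b t] //=.
  by rewrite rcons_path => /andP[].
by move: H; rewrite /= rcons_path => ->.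
Qed.

Definition lgen (L : nat) (s : 'I_L) (w : FreeZ2 L) : FreeZ2 L :=
  exist _ (lmul_seq s (val w)) (lmul_reduced s (valP w)).
Definition rgen (L : nat) (w : FreeZ2 L) (s : 'I_L) : FreeZ2 L :=
  exist _ (rmul_seq (val w) s) (rmul_reduced s (valP w)).

Definition hecke_p (R : realType) (q : R) : R := (q - 1) / q ^+ 2.

Section Ops.
Variables (R : realType) (L : nat).
Local Notation C := (R[i]).
Local Notation W := (FreeZ2 L).

Definition basis_vec (w : W) : W -> C := fun x => (x == w)%:R.

(* Action of T_s by left multiplication on a coefficient function f : W -> C
   (f = sum_w f(w) e_w).  From T_s e_w = e_{sw} (|sw| > |w|) and
   T_s e_w = e_{sw} + p e_w (|sw| < |w|), the coefficient at x is
   f(sx) + p [|sx| < |x|] f(x). *)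
Definition Tleft (p : R) (s : 'I_L) (f : W -> C) : W -> C :=
  fun x => f (lgen s x) + (if (wlen (lgen s x) < wlen x)%N then p%:C * f x else 0).

(* Right multiplication by T_s: from e_w T_s = e_{ws} (|ws| > |w|) and
   e_w T_s = e_{ws} + p e_w (|ws| < |w|). *)
Definition Tright (p : R) (s : 'I_L) (f : W -> C) : W -> C :=
  fun x => f (rgen x s) + (if (wlen (rgen x s) < wlen x)%N then p%:C * f x else 0).

Definition hleft (p : R) (f : W -> C) : W -> C :=
  fun x => \sum_(s < L) Tleft p s f x.
Definition hright (p : R) (f : W -> C) : W -> C :=
  fun x => \sum_(s < L) Tright p s f x.

Definition sqsum (f : W -> C) (s : seq W) : C := \sum_(x <- s) `|f x| ^+ 2.

Definition in_l2 (f : W -> C) : Prop :=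
  exists M : R, forall s : seq W, uniq s -> sqsum f s <= M%:C.

Definition l2norm_lt (f : W -> C) (eps : R) : Prop :=
  exists b : R, b < eps ^+ 2 /\ forall s : seq W, uniq s -> sqsum f s <= b%:C.

End Ops.

(* Up to the terms p T_x, which h and R_h both add (for x <> e) and which
   therefore cancel, (h - R_h) eta at x is the sum of eta over the left
   neighbours s x minus the sum over the right neighbours x s.  Choose a letter c such that Z = v c w is reduced (L >= 3 leaves a
   choice) and let Y_0, ..., Y_n be the subwords of Z of length n + 1, n = |v|.
   For reduced Y, the operator sends the indicator of Y to
   [behead Y] - [belast Y] plus a defect on words of length |Y| + 1; adding the
   indicators of the words a Y b with |a| = |b| = k, with weights
   -(1 - k/(N+1)) (L-1)^-k, pushes the defect outwards until, for k <= N, only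
   defects of size ((N+1) (L-1)^k)^-1 on words of length |Y| + 2k + 1 remain.
   There are at most L (L-1)^(|Y|+2k+1) such words, so the remaining error has
   squared norm O(1/N), while the main terms telescope over i to e_v - e_w. *)

From mathcomp Require Import all_boot all_order all_algebra.
From mathcomp Require Import complex.
From mathcomp Require Import reals.
From mathcomp Require Import zify ring.
Set Implicit Arguments. Unset Strict Implicit. Unset Printing Implicit Defensive.
Import Order.TTheory GRing.Theory Num.Theory.
Local Open Scope ring_scope.

Lemma take_size_cons (T : Type) (y : T) (Y : seq T) :
  take (size Y) (y :: Y) = belast y Y.
Proof. by elim: Y y => //= b Y IH y; rewrite IH. Qed.

Section Words.
Variable L : nat.
Implicit Types (x z Y : seq 'I_L) (a s : 'I_L).

Definition occurs_at Y k z : bool := take (size Y) (drop k z) == Y.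

Lemma occurs_atS Y k a z : occurs_at Y k.+1 (a :: z) = occurs_at Y k z.
Proof. by []. Qed.

Lemma occurs_at_rcons Y k z a : (k + size Y <= size z)%N ->
  occurs_at Y k (rcons z a) = occurs_at Y k z.
Proof.
move=> hz; rewrite /occurs_at drop_rcons; last by lia.
by rewrite -cats1 takel_cat // size_drop; lia.
Qed.

Lemma occurs_at_belast Y k a z : (k + size Y <= size z)%N ->
  occurs_at Y k (belast a z) = occurs_at Y k (a :: z).
Proof. by move=> hz; rewrite [a :: z]lastI occurs_at_rcons // size_belast. Qed.

Lemma occurs_at0 Y z : size z = size Y -> occurs_at Y 0 z = (z == Y).
Proof. by move=> hz; rewrite /occurs_at drop0 -hz take_size. Qed.

Section Sums.
Variable V : nmodType.
Implicit Type f : seq 'I_L -> V.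

Lemma sum_lmul_cons f a x :
  \sum_(s < L) f (lmul_seq s (a :: x)) = f x + \sum_(s < L | s != a) f (s :: a :: x).
Proof.
rewrite (bigD1 a) //= eqxx; congr (_ + _); apply: eq_bigr => s hs.
by rewrite eq_sym (negbTE hs).
Qed.

Lemma sum_rmul_cons f a x :
  \sum_(s < L) f (rmul_seq (a :: x) s) =
  f (belast a x) + \sum_(s < L | s != last a x) f (rcons (a :: x) s).
Proof.
rewrite (bigD1 (last a x)) //= eqxx; congr (_ + _); apply: eq_bigr => s hs.
by rewrite eq_sym (negbTE hs).
Qed.

End Sums.
End Words.

Section Commutator.
Variables (R : comNzRingType) (L : nat).
Implicit Types (x z Y : seq 'I_L) (a s : 'I_L) (f : seq 'I_L -> R).

Definition ad_h f x : R :=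
  \sum_(s < L) f (lmul_seq s x) - \sum_(s < L) f (rmul_seq x s).

Lemma ad_h_nil f : ad_h f [::] = 0.
Proof. exact: subrr. Qed.

Lemma ad_h_cons f a x : ad_h f (a :: x) =
  f x - f (belast a x) +
  (\sum_(s < L | s != a) f (s :: a :: x) - \sum_(s < L | s != last a x) f (rcons (a :: x) s)).
Proof. by rewrite /ad_h sum_lmul_cons sum_rmul_cons; ring. Qed.

Lemma ad_h_sum n (F : 'I_n -> seq 'I_L -> R) x :
  ad_h (fun z => \sum_(i < n) F i z) x = \sum_(i < n) ad_h (F i) x.
Proof. by rewrite /ad_h sumrB; congr (_ - _); apply: exchange_big. Qed.

Lemma ad_hZ c f x : ad_h (fun z => c * f z) x = c * ad_h f x.
Proof. by rewrite /ad_h mulrBr !mulr_sumr. Qed.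

Lemma sumr_const_neq a (c : R) : \sum_(s < L | s != a) c = L.-1%:R * c.
Proof.
rewrite (eq_bigl (fun s => s \in predC1 a)) // sumr_const cardC1 card_ord.
by rewrite mulr_natl.
Qed.

Lemma sum_cons_eq Y a x : reduced Y ->
  \sum_(s < L | s != a) (s :: a :: x == Y)%:R = (a :: x == behead Y)%:R :> R.
Proof.
case: Y => [|y Y] redY /=; first by rewrite big1.
have [eY | neq] := eqVneq Y (a :: x); last first.
  by rewrite big1 // => s _; rewrite eqseq_cons [_ == Y]eq_sym (negbTE neq) andbF.
have ya : y != a by move: redY; rewrite eY => /andP[].
rewrite (bigD1 y) //= eY !eqxx big1 ?addr0 // => s /andP[_ sy].
by rewrite eqseq_cons (negbTE sy).
Qed.

Lemma sum_rcons_eq Y a x : reduced Y ->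
  \sum_(s < L | s != last a x) (rcons (a :: x) s == Y)%:R =
  (a :: x == take (size Y).-1 Y)%:R :> R.
Proof.
case: Y => [|y Y] redY; first by rewrite big1 // => s _; rewrite -cats1.
rewrite -[(size (y :: Y)).-1]/(size Y) take_size_cons [y :: Y]lastI.
have [ex | neq] := eqVneq (a :: x) (belast y Y); last first.
  by rewrite big1 // => s _; rewrite eqseq_rcons (negbTE neq).
have xy : last a x != last y Y.
  by move: redY; rewrite /reduced [y :: Y]lastI -ex /= rcons_path => /andP[_].
rewrite (bigD1 (last y Y)) 1?eq_sym // -ex eqxx big1 => [|s /andP[_ sy]].
  by rewrite /= addr0.
by rewrite eqseq_rcons (negbTE sy) andbF.
Qed.

Definition centered Y k z : R :=
  (size z == size Y + k.*2)%N%:R * (occurs_at Y k z)%:R.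

Definition shift_defect Y m z : R :=
  (size z == (size Y + m.*2).+1)%N%:R * ((occurs_at Y m.+1 z)%:R - (occurs_at Y m z)%:R).

Definition end_defect Y z : R := (z == behead Y)%:R - (z == take (size Y).-1 Y)%:R.

Lemma shift_defect_nil Y m : shift_defect Y m [::] = 0.
Proof. by rewrite /shift_defect mul0r. Qed.

Lemma end_defect_nil Y : end_defect Y [::] = 0.
Proof. by case: Y => [|y [|y' Y]]; rewrite /end_defect /= ?subrr. Qed.

Lemma centered0 Y z : centered Y 0 z = (z == Y)%:R.
Proof.
rewrite /centered double0 addn0; have [hz | hz] := eqVneq (size z) (size Y).
  by rewrite occurs_at0 // mul1r.
by rewrite mul0r; case: eqP => // ezY; rewrite ezY eqxx in hz.
Qed.

Lemma centered_sub_belast Y k a x :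
  centered Y k x - centered Y k (belast a x) = shift_defect Y k (a :: x).
Proof.
rewrite /centered /shift_defect size_belast /= eqSS occurs_atS.
have [hx | _] := eqVneq (size x) (size Y + k.*2); last by rewrite !mul0r subrr.
by rewrite occurs_at_belast; [ring | lia].
Qed.

Lemma sum_centered0 Y a x : reduced Y ->
  \sum_(s < L | s != a) centered Y 0 (s :: a :: x) -
  \sum_(s < L | s != last a x) centered Y 0 (rcons (a :: x) s) = end_defect Y (a :: x).
Proof.
move=> redY; under eq_bigr do rewrite centered0.
by under [X in _ - X]eq_bigr do rewrite centered0; rewrite sum_cons_eq ?sum_rcons_eq.
Qed.

Lemma sum_centeredS Y k a x :
  \sum_(s < L | s != a) centered Y k.+1 (s :: a :: x) -
  \sum_(s < L | s != last a x) centered Y k.+1 (rcons (a :: x) s) =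
  - (L.-1%:R * shift_defect Y k (a :: x)).
Proof.
set b := ((size (a :: x)).+1 == size Y + k.+1.*2)%N.
rewrite (eq_bigr (fun=> b%:R * (occurs_at Y k (a :: x))%:R)) // sumr_const_neq.
rewrite (eq_bigr (fun=> b%:R * (occurs_at Y k.+1 (a :: x))%:R)) => [|s _]; last first.
  rewrite /centered size_rcons -/b; have [hb|] := boolP b; last by rewrite !mul0r.
  by rewrite occurs_at_rcons //; move/eqP: hb; rewrite doubleS; lia.
rewrite sumr_const_neq /shift_defect /b doubleS !addnS eqSS; ring.
Qed.

Lemma ad_h_centered0 Y x : reduced Y ->
  ad_h (centered Y 0) x = end_defect Y x + shift_defect Y 0 x.
Proof.
case: x => [|a x] redY; first by rewrite ad_h_nil end_defect_nil shift_defect_nil addr0.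
by rewrite ad_h_cons centered_sub_belast sum_centered0 // addrC.
Qed.

Lemma ad_h_centeredS Y k x :
  ad_h (centered Y k.+1) x = shift_defect Y k.+1 x - L.-1%:R * shift_defect Y k x.
Proof.
case: x => [|a x]; first by rewrite ad_h_nil !shift_defect_nil mulr0 subrr.
by rewrite ad_h_cons centered_sub_belast sum_centeredS.
Qed.

Definition cone (F : nat -> R) N Y z : R := \sum_(k < N.+1) F k * centered Y k z.

Lemma ad_h_cone F N Y x : reduced Y -> F N.+1 = 0 ->
  ad_h (cone F N Y) x =
  F 0%N * end_defect Y x + \sum_(m < N.+1) (F m - L.-1%:R * F m.+1) * shift_defect Y m x.
Proof.
move=> redY FN; rewrite ad_h_sum big_ord_recl ad_hZ ad_h_centered0 //.
under eq_bigr => i _ do rewrite ad_hZ lift0 ad_h_centeredS mulrBr.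
rewrite (eq_bigr (fun m : 'I_N.+1 => F m * shift_defect Y m x -
  F m.+1 * (L.-1%:R * shift_defect Y m x))) => [|m _]; last by ring.
rewrite !sumrB big_ord_recl big_ord_recr FN mul0r.
under [X in _ = _ + (_ + X - _)]eq_bigr => i _ do rewrite lift0.
rewrite /=; ring.
Qed.

End Commutator.

Section Norms.
Variables (R : numDomainType) (L : nat).
Implicit Types (z Y : seq 'I_L).

Lemma norm_centered_le Y k z : `|centered R Y k z| <= (size z == size Y + k.*2)%N%:R.
Proof. by rewrite /centered normrM !normr_nat; case: occurs_at; rewrite ?mulr1 ?mulr0. Qed.

Lemma norm_shift_defect_le Y m z :
  `|shift_defect R Y m z| <= (size z == (size Y + m.*2).+1)%N%:R.
Proof.
rewrite /shift_defect normrM normr_nat -[X in _ <= X]mulr1 ler_wpM2l ?ler0n //.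
by case: occurs_at; case: occurs_at; rewrite ?subrr ?normr0 ?subr0 ?sub0r ?normrN ?normr1.
Qed.

Lemma norm_cone_le (F : nat -> R) N Y z : (forall k, `|F k| <= 1) ->
  `|cone F N Y z| <= \sum_(k < N.+1) (size z == size Y + k.*2)%N%:R.
Proof.
move=> F_le1; apply: le_trans (ler_norm_sum _ _ _) _; apply: ler_sum => k _.
by rewrite normrM -[X in _ <= X]mul1r ler_pM ?normr_ge0 ?norm_centered_le.
Qed.

Lemma norm_sum_shift_defect_le (c : nat -> R) N Y z : (forall m, 0 <= c m) ->
  `|\sum_(m < N.+1) c m * shift_defect R Y m z| <=
  \sum_(m < N.+1) c m * (size z == (size Y + m.*2).+1)%N%:R.
Proof.
move=> c_ge0; apply: le_trans (ler_norm_sum _ _ _) _; apply: ler_sum => m _.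
by rewrite normrM ger0_norm ?ler_wpM2l ?norm_shift_defect_le.
Qed.

End Norms.

Section Weights.
Variables (R : numFieldType) (L N : nat).
Hypothesis L_gt1 : (1 < L)%N.

Definition weight k : R := - ((N.+1 - k)%N%:R / (N.+1%:R * L.-1%:R ^+ k)).

Let branching_gt0 : 0 < L.-1%:R :> R.
Proof. by rewrite ltr0n; lia. Qed.

Lemma weight0 : weight 0 = -1.
Proof. by rewrite /weight subn0 expr0 mulr1 divff // pnatr_eq0. Qed.

Lemma weight_succN : weight N.+1 = 0.
Proof. by rewrite /weight subnn mul0r oppr0. Qed.

Lemma weight_defect m : (m <= N)%N ->
  weight m - L.-1%:R * weight m.+1 = - (N.+1%:R * L.-1%:R ^+ m)^-1.
Proof.
move=> hm; rewrite /weight.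
have -> : (N.+1 - m)%N%:R = (N.+1 - m.+1)%N%:R + 1 :> R by rewrite subSS subSn // natr1.
rewrite exprS; field.
by rewrite expf_neq0 ?gt_eqF // nat1r ltr0n.
Qed.

Lemma norm_weight_le1 k : `|weight k| <= 1.
Proof.
have den_gt0 : 0 < N.+1%:R * L.-1%:R ^+ k :> R by rewrite mulr_gt0 ?ltr0Sn ?exprn_gt0.
rewrite /weight normrN ger0_norm; last by rewrite divr_ge0 ?ler0n ?ltW.
rewrite ler_pdivrMr // mul1r -[X in X <= _]mulr1 ler_pM ?ler0n ?ler_nat ?leq_subr //.
by rewrite exprn_ege1 // ler1n; lia.
Qed.

End Weights.

Lemma size_flatten_map_le (T : eqType) (U : Type) (f : T -> seq U) (ws : seq T) c :
  (forall w, w \in ws -> (size (f w) <= c)%N) ->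
  (size (flatten [seq f w | w <- ws]) <= c * size ws)%N.
Proof.
elim: ws => [|w ws IH] //= h.
rewrite size_cat mulnS leq_add ?h ?mem_head // IH // => w' hw'.
by apply: h; rewrite inE hw' orbT.
Qed.

Section Counting.
Variable L : nat.
Hypothesis L_gt1 : (1 < L)%N.

Definition extensions (w : seq 'I_L) : seq (seq 'I_L) :=
  [seq a :: w | a <- enum 'I_L & if w is b :: _ then a != b else true].

Fixpoint reduced_words (k : nat) : seq (seq 'I_L) :=
  if k is k'.+1 then flatten [seq extensions w | w <- reduced_words k'] else [:: [::]].

Lemma mem_reduced_words (w : seq 'I_L) : reduced w -> w \in reduced_words (size w).
Proof.
elim: w => [|a w IH] //= redaw; apply/flatten_mapP; exists w.
  by apply: IH; move: redaw; rewrite /reduced /=; case: w => //= b w /andP[].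
apply/mapP; exists a => //; rewrite mem_filter mem_enum andbT.
by move: redaw; rewrite /reduced /=; case: w {IH} => //= b w /andP[].
Qed.

Lemma size_reduced_words k w : w \in reduced_words k -> size w = k.
Proof.
elim: k w => [|k IH] w /=; first by rewrite inE => /eqP ->.
by case/flatten_mapP => w0 /IH <- /mapP [a _ ->].
Qed.

Lemma size_extensions w : (size (extensions w) <= L)%N.
Proof. by rewrite size_map size_filter (leq_trans (count_size _ _)) ?size_enum_ord. Qed.

Lemma size_extensions_cons b w : (size (extensions (b :: w)) <= L.-1)%N.
Proof.
rewrite size_map size_filter; have := count_predC (pred1 b) (enum 'I_L).
rewrite size_enum_ord (count_uniq_mem _ (enum_uniq _)) mem_enum /=.
rewrite (@eq_count _ _ (predC (pred1 b))) //; lia.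
Qed.

Lemma size_reduced_words_le k : (size (reduced_words k) <= L * L.-1 ^ k)%N.
Proof.
elim: k => [|[|k] IH]; first by rewrite /= expn0 muln1; lia.
  by rewrite /= cats0 (leq_trans (size_extensions _)) // expn1; nia.
rewrite expnS mulnCA (leq_trans _ (leq_mul (leqnn _) IH)) //.
apply: size_flatten_map_le => -[|b w] hw; last exact: size_extensions_cons.
by have := @size_reduced_words k.+1 _ hw.
Qed.

Lemma count_wlen_le (s : seq (FreeZ2 L)) l : uniq s ->
  (count (fun x => wlen x == l) s <= L * L.-1 ^ l)%N.
Proof.
move=> uniq_s; apply: leq_trans (size_reduced_words_le l).
rewrite -size_filter -(size_map val) uniq_leq_size //.
  by rewrite map_inj_uniq ?filter_uniq //; exact: val_inj.
move=> y /mapP [x]; rewrite mem_filter => /andP[/eqP <- _] ->.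
exact/mem_reduced_words/valP.
Qed.

End Counting.

Lemma sqr_sum_indicator (R : comNzRingType) M (g : nat -> R) (len : nat -> nat) l :
  injective len ->
  (\sum_(m < M) g m * (l == len m)%:R) ^+ 2 = \sum_(m < M) g m ^+ 2 * (l == len m)%:R.
Proof.
move=> len_inj; case: (pickP (fun m : 'I_M => l == len m)) => [m0 /eqP -> | none].
  rewrite (bigD1 m0) // [in RHS](bigD1 m0) //= eqxx !mulr1.
  rewrite !big1 ?addr0 // => m hm;
    by rewrite (inj_eq len_inj) [_ == _]eq_sym (val_eqE m m0) (negbTE hm) mulr0.
by rewrite !big1 ?expr0n // => m _; rewrite none mulr0.
Qed.

Lemma sum_natr_count (R : nzSemiRingType) (T : Type) (P : pred T) (s : seq T) (c : R) :
  \sum_(x <- s) c * (P x)%:R = c * (count P s)%:R.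
Proof. by rewrite -mulr_sumr -natr_sum -sum1_count [in RHS]big_mkcond. Qed.

Section SquareSums.
Variables (R : realType) (L : nat).
Hypothesis L_gt1 : (1 < L)%N.
Local Open Scope complex_scope.

Lemma normC_real (a : R) : `|a%:C| = `|a|%:C.
Proof. by rewrite normc_def /= expr0n addr0 sqrtr_sqr. Qed.

Lemma sqsum_le_lengths (g : FreeZ2 L -> R) M (b : nat -> R) (len : nat -> nat)
    (s : seq (FreeZ2 L)) :
  injective len -> (forall m, 0 <= b m) ->
  (forall x, `|g x| <= \sum_(m < M) b m * (wlen x == len m)%:R) -> uniq s ->
  sqsum (fun x => (g x)%:C) s <= (\sum_(m < M) b m ^+ 2 * (L * L.-1 ^ len m)%:R)%:C.
Proof.
move=> len_inj b_ge0 g_le uniq_s; rewrite /sqsum.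
under eq_bigr do rewrite normC_real -rmorphXn.
rewrite -rmorph_sum lecR.
have g_sqr_le x : `|g x| ^+ 2 <= \sum_(m < M) b m ^+ 2 * (wlen x == len m)%:R.
  rewrite -sqr_sum_indicator // ler_pXn2r ?nnegrE //.
  by apply: sumr_ge0 => m _; rewrite mulr_ge0.
apply: le_trans (ler_sum _ (fun x _ => g_sqr_le x)) _.
rewrite exchange_big /=; apply: ler_sum => m _.
rewrite sum_natr_count ler_wpM2l ?exprn_ge0 // ler_nat.
exact: count_wlen_le.
Qed.

End SquareSums.

Section RightMultiplication.
Variables (R : realType) (L : nat).
Local Notation W := (FreeZ2 L).

Lemma sum_shorter_lgen (V : nmodType) (c : V) (x : W) :
  \sum_(s < L) (if (wlen (lgen s x) < wlen x)%N then c else 0) =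
  if val x is [::] then 0 else c.
Proof.
rewrite /wlen /=; case: (val x) => [|a w] /=; first exact: big1.
rewrite (bigD1 a) //= eqxx ltnSn big1 ?addr0 // => s /negbTE.
by rewrite eq_sym => ->; rewrite /= ltnNge leqW.
Qed.

Lemma sum_shorter_rgen (V : nmodType) (c : V) (x : W) :
  \sum_(s < L) (if (wlen (rgen x s) < wlen x)%N then c else 0) =
  if val x is [::] then 0 else c.
Proof.
rewrite /wlen /=; case: (val x) => [|a w] /=; first exact: big1.
rewrite (bigD1 (last a w)) //= eqxx size_belast ltnSn big1 ?addr0 // => s /negbTE.
by rewrite eq_sym => ->; rewrite /= size_rcons ltnNge leqW.
Qed.

Local Open Scope complex_scope.

Lemma hleft_sub_hright p (g : seq 'I_L -> R) (x : W) :
  hleft p (fun y => (g (val y))%:C) x - hright p (fun y => (g (val y))%:C) x =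
  (ad_h g (val x))%:C.
Proof.
rewrite /hleft /hright /Tleft /Tright !big_split /= sum_shorter_lgen sum_shorter_rgen.
by rewrite opprD addrACA subrr addr0 rmorphB !rmorph_sum.
Qed.

End RightMultiplication.

Section Construction.
Variables (R : realType) (L N n : nat) (Z : seq 'I_L).
Hypotheses (L_gt1 : (1 < L)%N) (reduced_Z : reduced Z) (size_Z : size Z = (n + n).+1).

Definition window i := take n.+1 (drop i Z).

Lemma size_window i : (i <= n)%N -> size (window i) = n.+1.
Proof.
move=> hi; have hi2 : (i <= n + n)%N := leq_trans hi (leq_addl n n).
by rewrite size_takel // size_drop size_Z subSn // ltnS leq_subRL // leq_add2r.
Qed.

Lemma reduced_window i : reduced (window i).
Proof. exact/take_sorted/drop_sorted. Qed.

Lemma end_defect_window i x : (i <= n)%N ->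
  end_defect R (window i) x = (x == take n (drop i.+1 Z))%:R - (x == take n (drop i Z))%:R.
Proof.
move=> hi; rewrite /end_defect size_window // /window take_takel //.
by rewrite -[i.+1]add1n -drop_drop; case: (drop i Z) => [|a s] /=; rewrite ?drop0.
Qed.

Definition eta_fun z : R := \sum_(i < n.+1) cone (weight R L N) N (window i) z.

Definition residual z : R :=
  \sum_(i < n.+1) \sum_(m < N.+1) (N.+1%:R * L.-1%:R ^+ m)^-1 * shift_defect R (window i) m z.

Lemma ad_h_eta x :
  ad_h eta_fun x = (x == take n Z)%:R - (x == take n (drop n.+1 Z))%:R - residual x.
Proof.
rewrite ad_h_sum (eq_bigr (fun i : 'I_n.+1 => - end_defect R (window i) x -
  \sum_(m < N.+1) (N.+1%:R * L.-1%:R ^+ m)^-1 * shift_defect R (window i) m x)); last first.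
  move=> i _; rewrite ad_h_cone ?reduced_window ?weight_succN // weight0 // mulN1r.
  rewrite -sumrN; congr (_ + _); apply: eq_bigr => m _.
  by rewrite weight_defect // ?mulNr // -ltnS.
rewrite sumrB /residual; congr (_ - _).
pose u j : R := (x == take n (drop j Z))%:R.
rewrite sumrN (eq_bigr (fun i : 'I_n.+1 => u i.+1 - u i)) => [|i _]; last first.
  by rewrite end_defect_window // -ltnS.
by rewrite -(big_mkord xpredT (fun i => u i.+1 - u i)) telescope_sumr // /u drop0 opprB.
Qed.

Lemma norm_eta_le z :
  `|eta_fun z| <= \sum_(k < N.+1) n.+1%:R * (size z == n.+1 + k.*2)%N%:R.
Proof.
apply: le_trans (ler_norm_sum _ _ _) _.
apply: le_trans (ler_sum _ (fun (i : 'I_n.+1) _ =>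
  norm_cone_le N (window i) z (norm_weight_le1 R N L_gt1))) _.
under eq_bigr => i _ do rewrite (size_window (ltn_ord i)).
by rewrite sumr_const card_ord -mulr_sumr mulr_natl.
Qed.

Lemma norm_residual_le z :
  `|residual z| <=
  \sum_(m < N.+1) n.+1%:R * (N.+1%:R * L.-1%:R ^+ m)^-1 * (size z == (n.+1 + m.*2).+1)%N%:R.
Proof.
have c_ge0 m : 0 <= (N.+1%:R * L.-1%:R ^+ m)^-1 :> R.
  by rewrite invr_ge0 mulr_ge0 ?exprn_ge0 ?ler0n.
apply: le_trans (ler_norm_sum _ _ _) _.
apply: le_trans (ler_sum _ (fun (i : 'I_n.+1) _ =>
  norm_sum_shift_defect_le N (window i) z c_ge0)) _.
under eq_bigr => i _ do rewrite (size_window (ltn_ord i)).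
under [X in _ <= X]eq_bigr do rewrite -mulrA.
by rewrite sumr_const card_ord -mulr_sumr mulr_natl.
Qed.

Local Open Scope complex_scope.

Lemma eta_in_l2 : in_l2 (fun x => (eta_fun (val x))%:C).
Proof.
eexists => s uniq_s.
apply: (sqsum_le_lengths L_gt1 (b := fun=> n.+1%:R) (len := fun k => (n.+1 + k.*2)%N)) => //.
- by move=> k1 k2 /= /eqP; rewrite eqn_add2l => /eqP/(can_inj doubleK).
- by move=> x; apply: norm_eta_le.
Qed.

Definition residual_bound : R := n.+1%:R ^+ 2 * L%:R * L.-1%:R ^+ n.+2.

Lemma residual_sqsum_le (s : seq (FreeZ2 L)) : uniq s ->
  sqsum (fun x => (residual (val x))%:C) s <= (residual_bound / N.+1%:R)%:C.
Proof.
move=> uniq_s; apply: le_trans (sqsum_le_lengths L_gt1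
  (b := fun m => n.+1%:R * (N.+1%:R * L.-1%:R ^+ m)^-1)
  (len := fun m => (n.+1 + m.*2).+1) _ _ _ uniq_s) _.
- by move=> m1 m2 /= /eqP; rewrite eqSS eqn_add2l => /eqP/(can_inj doubleK).
- by move=> m; rewrite mulr_ge0 ?invr_ge0 ?mulr_ge0 ?exprn_ge0 ?ler0n.
- by move=> x; apply: norm_residual_le.
have L1_neq0 : L.-1%:R != 0 :> R by rewrite pnatr_eq0 -lt0n -subn1 subn_gt0.
have N1_neq0 : N.+1%:R != 0 :> R by rewrite pnatr_eq0.
rewrite lecR (eq_bigr (fun=> residual_bound / N.+1%:R ^+ 2)) => [|m _]; last first.
  rewrite natrM natrX -addSn -mul2n exprD mulnC exprM /residual_bound.
  have : L.-1%:R ^+ m != 0 :> R by rewrite expf_neq0.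
  move: (L.-1%:R ^+ m) => y y_neq0; field.
  by rewrite nat1r N1_neq0.
rewrite sumr_const card_ord -[residual_bound / _ *+ _]mulr_natl.
rewrite le_eqVlt; apply/orP; left; apply/eqP; field.
by rewrite nat1r.
Qed.

End Construction.

Lemma exists_div_succ_lt (R : archiRealFieldType) (K e : R) : 0 < e ->
  exists N : nat, K / N.+1%:R < e.
Proof.
move=> e_gt0; exists (Num.Def.archi_bound (`|K| / e)).
rewrite (le_lt_trans (ler_wpM2r _ (ler_norm K))) ?invr_ge0 ?ler0n //.
rewrite ltr_pdivrMr ?ltr0Sn // mulrC -ltr_pdivrMr //.
apply: lt_le_trans (archi_boundP (divr_ge0 (normr_ge0 K) (ltW e_gt0))) _.
by rewrite ler_nat.
Qed.

Lemma exists_reduced_join L (v w : seq 'I_L) : (3 <= L)%N -> reduced v -> reduced w ->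
  exists c, reduced (v ++ c :: w).
Proof.
move=> L_ge3 red_v red_w; have d : 'I_L := Ordinal (leq_trans (isT : 0 < 3)%N L_ge3).
have : (0 < #|~: [set last d v; head d w]|)%N.
  have := cardsC [set last d v; head d w]; rewrite card_ord cards2.
  by case: (_ != _) => /=; lia.
case/card_gt0P => c; rewrite in_setC in_set2 negb_or => /andP[c_last c_head].
exists c; rewrite /reduced sorted_cat_cons; apply/andP; split.
  by case: v red_v c_last => //= a v; rewrite rcons_path => -> /=; rewrite eq_sym.
by case: w red_w c_head => //= b w -> /=; rewrite eq_sym andbT.
Qed.

Theorem lemma2p4 (R : realType) (L : nat) (q : R) :
  (3 <= L)%N -> 0 < q <= 1 ->
  forall v w : FreeZ2 L, wlen v = wlen w ->
  forall eps : R, 0 < eps ->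
  exists eta : FreeZ2 L -> R[i],
    in_l2 eta /\
    l2norm_lt
      (fun x => basis_vec R v x - basis_vec R w x
                - (hleft (hecke_p q) eta x - hright (hecke_p q) eta x))
      eps.
Proof.
move=> L_ge3 _ v w vw eps eps_gt0; have L_gt1 : (1 < L)%N by lia.
have [c reduced_Z] := exists_reduced_join L_ge3 (valP v) (valP w).
set Z := val v ++ c :: val w.
have size_Z : size Z = (wlen v + wlen v).+1 by rewrite size_cat /= addnS {2}vw.
have take_v : take (wlen v) Z = val v by rewrite take_size_cat.
have take_w : take (wlen v) (drop (wlen v).+1 Z) = val w.
  by rewrite /Z -cat_rcons drop_size_cat ?size_rcons // take_oversize // vw.
pose K := residual_bound R L (wlen v).
have [N K_small] := exists_div_succ_lt K (exprn_gt0 2 eps_gt0).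
exists (fun x => (eta_fun R N (wlen v) Z (val x))%:C%C); split; first exact: eta_in_l2.
exists (K / N.+1%:R); split => // s uniq_s.
rewrite /sqsum (eq_bigr (fun x => `|(residual R N (wlen v) Z (val x))%:C%C| ^+ 2)) => [|x _].
  exact: residual_sqsum_le.
rewrite hleft_sub_hright ad_h_eta // take_v take_w /basis_vec -!val_eqE /=.
by rewrite !rmorphB !rmorph_nat opprB addrC subrK.
Qed.
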